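(* Suppose that $A$ and $B$ are Gram mates and $\mathrm{rank}(A-B)=1$. If the remaining matrix of $A$ and $B$ is fixable, then $A$ is isomorphic to $B$.
   Context: Two $(0,1)$ matrices $A\neq B$ are Gram mates if $AA^T=BB^T$ and $A^TA=B^TB$; they are isomorphic if $B=PAQ$ for permutation matrices $P,Q$. If $A,B$ are Gram mates with $\mathrm{rank}(A-B)=1$, then after permuting rows and columns one may write $A=\begin{bmatrix} 0 & J_{k_1,k_2} & X_1\\ J_{k_1,k_2} & 0 & X_2\\ X_3 & X_4 & Y\end{bmatrix}$, $B=\begin{bmatrix} J_{k_1,k_2} & 0 & X_1\\ 0 & J_{k_1,k_2} & X_2\\ X_3 & X_4 & Y\end{bmatrix}$ with $k_1,k_2>0$, $\mathbf{1}^TX_1=\mathbf{1}^TX_2$, $X_3\mathbf{1}=X_4\mathbf{1}$, where $J_{p,q}$ is the $p\times q$ all-ones matrix; $Y$ (the submatrix on rows and columns where $A-B$ is zero) is the remaining matrix of $A$ and $B$. For $(0,1)$ matrices $Z_1,Z_2$ of equal size, $\mathcal R_{Z_1,Z_2}$ is the set of triples $(P_1,P_2,Q)$ of permutation matrices with $Z_2=P_1Z_1Q$ and $Z_1=P_2Z_2Q$, and $\mathcal L_{Z_1,Z_2}$ is the set of triples $(P,Q_1,Q_2)$ of permutation matrices with $Z_1=PZ_1Q_1$ and $Z_2=PZ_2Q_2$. $Y$ is fixable if there exist permutation matrices $P,Q$ with $Y=PYQ$ such that either (i) $(P_1,P_2,Q)\in\mathcal R_{X_1,X_2}$ and $(P,Q_3,Q_4)\in\mathcal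 L_{X_3,X_4}$ for some $P_1,P_2,Q_3,Q_4$, or (ii) $(Q_3,Q_4,P^T)\in\mathcal R_{X_3^T,X_4^T}$ and $(Q^T,P_1,P_2)\in\mathcal L_{X_1^T,X_2^T}$ for some $P_1,P_2,Q_3,Q_4$. *)

From HB Require Import structures.
From mathcomp Require Import all_boot all_order all_algebra.
Set Implicit Arguments. Unset Strict Implicit. Unset Printing Implicit Defensive.
Import GRing.Theory Num.Theory.
Local Open Scope ring_scope.

(* Matrices are taken over the rationals; (0,1) matrices are those with all
   entries in {0,1}.  Rank is the rank over Q (= rank over R). *)

Definition zero_one m n (A : 'M[rat]_(m, n)) : Prop :=
  forall i j, A i j = 0 \/ A i j = 1.

Definition gram_mates m n (A B : 'M[rat]_(m, n)) : Prop :=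
  [/\ zero_one A, zero_one B, A <> B,
      A *m A^T = B *m B^T & A^T *m A = B^T *m B].

Definition mx_isomorphic m n (A B : 'M[rat]_(m, n)) : Prop :=
  exists (P : 'M[rat]_m) (Q : 'M[rat]_n),
    [/\ is_perm_mx P, is_perm_mx Q & B = P *m A *m Q].

Definition R_set a b (Z1 Z2 : 'M[rat]_(a, b))
  (P1 P2 : 'M[rat]_a) (Q : 'M[rat]_b) : Prop :=
  [/\ is_perm_mx P1, is_perm_mx P2, is_perm_mx Q,
      Z2 = P1 *m Z1 *m Q & Z1 = P2 *m Z2 *m Q].

Definition L_set a b (Z1 Z2 : 'M[rat]_(a, b))
  (P : 'M[rat]_a) (Q1 Q2 : 'M[rat]_b) : Prop :=
  [/\ is_perm_mx P, is_perm_mx Q1, is_perm_mx Q2,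
      Z1 = P *m Z1 *m Q1 & Z2 = P *m Z2 *m Q2].

Definition fixable k1 k2 p q
  (X1 X2 : 'M[rat]_(k1, q)) (X3 X4 : 'M[rat]_(p, k2)) (Y : 'M[rat]_(p, q))
  : Prop :=
  exists (P : 'M[rat]_p) (Q : 'M[rat]_q),
    [/\ is_perm_mx P, is_perm_mx Q, Y = P *m Y *m Q &
      ((exists (P1 P2 : 'M[rat]_k1) (Q3 Q4 : 'M[rat]_k2),
          R_set X1 X2 P1 P2 Q /\ L_set X3 X4 P Q3 Q4)
   \/ (exists (P1 P2 : 'M[rat]_k1) (Q3 Q4 : 'M[rat]_k2),
          R_set X3^T X4^T Q3 Q4 P^T /\ L_set X1^T X2^T Q^T P1 P2))].

(* The block normal form of Gram mates A, B with rank(A - B) = 1. *)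
Definition rank1_normal_form k1 k2 p q
  (A B : 'M[rat]_(k1 + k1 + p, k2 + k2 + q))
  (X1 X2 : 'M[rat]_(k1, q)) (X3 X4 : 'M[rat]_(p, k2)) (Y : 'M[rat]_(p, q))
  : Prop :=
  let J : 'M[rat]_(k1, k2) := const_mx 1 in
  [/\ (0 < k1)%N /\ (0 < k2)%N,
      A = block_mx (block_mx 0 J J 0) (col_mx X1 X2) (row_mx X3 X4) Y,
      B = block_mx (block_mx J 0 0 J) (col_mx X1 X2) (row_mx X3 X4) Y,
      (const_mx 1 : 'M[rat]_(1, k1)) *m X1 = (const_mx 1 : 'M[rat]_(1, k1)) *m X2
    & X3 *m (const_mx 1 : 'M[rat]_(k2, 1)) = X4 *m (const_mx 1 : 'M[rat]_(k2, 1))].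

(* "The remaining matrix of A and B is fixable": after permuting rows and
   columns (simultaneously for A and B), A and B are in the normal form with
   blocks X1..X4 and remaining matrix Y, and Y is fixable. *)
Definition remaining_fixable m n (A B : 'M[rat]_(m, n)) : Prop :=
  exists (k1 k2 p q : nat) (em : m = (k1 + k1 + p)%N) (en : n = (k2 + k2 + q)%N)
         (P : 'M[rat]_m) (Q : 'M[rat]_n)
         (X1 X2 : 'M[rat]_(k1, q)) (X3 X4 : 'M[rat]_(p, k2)) (Y : 'M[rat]_(p, q)),
    [/\ is_perm_mx P, is_perm_mx Q,
        rank1_normal_form (castmx (em, en) (P *m A *m Q))
                          (castmx (em, en) (P *m B *m Q)) X1 X2 X3 X4 Y
      & fixable X1 X2 X3 X4 Y].

(* Swapping
   the first two row blocks of A puts its all-ones blocks where B has them;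
   the row permutations P1, P2 exchanging X1 and X2, the column permutations
   Q3, Q4 fixing X3 and X4, and the pair (P, Q) fixing Y then assemble into
   block permutation matrices carrying A to B.  The second alternative in the
   definition of fixability is the first one for the transposed matrices. *)

From mathcomp Require Import all_boot all_order all_algebra all_fingroup.
Set Implicit Arguments. Unset Strict Implicit. Unset Printing Implicit Defensive.
Import GRing.Theory.
Local Open Scope ring_scope.

Section PermutationMatrices.

Variable R : pzRingType.

Lemma perm_mxE n (s : 'S_n) i j : perm_mx s i j = (s i == j)%:R :> R.
Proof. by rewrite perm_mxEsub !mxE. Qed.

Lemma is_perm_mx_sum a b (g : 'I_a + 'I_b -> 'I_a + 'I_b) (M : 'M[R]_(a + b)) :
  injective g -> (forall u v, M (unsplit u) (unsplit v) = (g u == v)%:R) ->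
  is_perm_mx M.
Proof.
move=> g_inj M_g.
have s_inj : injective (fun i => unsplit (g (split i))).
  by move=> i j /(can_inj unsplitK) /g_inj /(can_inj splitK).
apply/is_perm_mxP; exists (perm s_inj); apply/matrixP => i j.
by rewrite perm_mxE permE -[i]splitK -[j]splitK M_g !unsplitK (can_eq unsplitK).
Qed.

Lemma is_perm_mx_diag_block a b (P1 : 'M[R]_a) (P2 : 'M[R]_b) :
  is_perm_mx P1 -> is_perm_mx P2 -> is_perm_mx (block_mx P1 0 0 P2).
Proof.
case/is_perm_mxP => s1 ->; case/is_perm_mxP => s2 ->.
pose g u := match u with inl i => inl (s1 i) | inr j => inr (s2 j) end.
apply: (@is_perm_mx_sum _ _ g) => [[i|i] [j|j] //= [] /perm_inj -> //|].
by case=> i [] j; rewrite ?block_mxEul ?block_mxEur ?block_mxEdl ?block_mxEdr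
  ?mxE ?perm_mxE.
Qed.

Lemma is_perm_mx_antidiag_block k (P1 P2 : 'M[R]_k) :
  is_perm_mx P1 -> is_perm_mx P2 -> is_perm_mx (block_mx 0 P1 P2 0).
Proof.
case/is_perm_mxP => s1 ->; case/is_perm_mxP => s2 ->.
pose g u := match u with inl i => inr (s1 i) | inr j => inl (s2 j) end.
apply: (@is_perm_mx_sum _ _ g) => [[i|i] [j|j] //= [] /perm_inj -> //|].
by case=> i [] j; rewrite ?block_mxEul ?block_mxEur ?block_mxEdl ?block_mxEdr
  ?mxE ?perm_mxE.
Qed.

Lemma perm_mx_mul_const m n (P : 'M[R]_m) (a : R) :
  is_perm_mx P -> P *m const_mx a = const_mx a :> 'M_(m, n).
Proof.
case/is_perm_mxP => s ->; rewrite -row_permE.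
by apply/matrixP => i j; rewrite !mxE.
Qed.

Lemma const_mx_mul_perm m n (P : 'M[R]_n) (a : R) :
  is_perm_mx P -> const_mx a *m P = const_mx a :> 'M_(m, n).
Proof.
case/is_perm_mxP => s ->; rewrite -[s]invgK -col_permE.
by apply/matrixP => i j; rewrite !mxE.
Qed.

End PermutationMatrices.

Lemma mx_isomorphic_tr m n (A B : 'M[rat]_(m, n)) :
  mx_isomorphic A^T B^T -> mx_isomorphic A B.
Proof.
case=> P [Q [pP pQ eB]]; exists Q^T, P^T; rewrite !is_perm_mx_tr; split => //.
by rewrite -[B]trmxK eB !trmx_mul trmxK mulmxA.
Qed.

Lemma mx_isomorphic_perm m n (P : 'M[rat]_m) (Q : 'M[rat]_n) (A B : 'M[rat]_(m, n)) :
  is_perm_mx P -> is_perm_mx Q ->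
  mx_isomorphic (P *m A *m Q) (P *m B *m Q) -> mx_isomorphic A B.
Proof.
case/is_perm_mxP => s ->; case/is_perm_mxP => t -> [R [S [pR pS eB]]].
exists (perm_mx s^-1 *m R *m perm_mx s), (perm_mx t *m S *m perm_mx t^-1).
split; rewrite ?is_perm_mxMl ?is_perm_mxMr ?perm_mx_is_perm //.
have -> : B = perm_mx s^-1 *m (perm_mx s *m B *m perm_mx t) *m perm_mx t^-1.
  rewrite !mulmxA -perm_mxM mulVg perm_mx1 mul1mx.
  by rewrite -mulmxA -perm_mxM mulgV perm_mx1 mulmx1.
by rewrite eB !mulmxA.
Qed.

Lemma swap_J_blocks_isomorphic k1 k2 p q
    (X1 X2 : 'M[rat]_(k1, q)) (X3 X4 : 'M[rat]_(p, k2)) (Y : 'M[rat]_(p, q))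
    P Q P1 P2 Q3 Q4 :
  R_set X1 X2 P1 P2 Q -> L_set X3 X4 P Q3 Q4 -> Y = P *m Y *m Q ->
  let J : 'M[rat]_(k1, k2) := const_mx 1 in
  mx_isomorphic (block_mx (block_mx 0 J J 0) (col_mx X1 X2) (row_mx X3 X4) Y)
                (block_mx (block_mx J 0 0 J) (col_mx X1 X2) (row_mx X3 X4) Y).
Proof.
case=> pP1 pP2 pQ eX2 eX1 [pP pQ3 pQ4 eX3 eX4] eY J.
exists (block_mx (block_mx 0 P2 P1 0) 0 0 P), (block_mx (block_mx Q3 0 0 Q4) 0 0 Q).
split; rewrite ?is_perm_mx_diag_block ?is_perm_mx_antidiag_block //.
do 2 rewrite ?(mulmx_block, mul_col_mx, mul_mx_row, mul_row_col, mul_row_block)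
  ?(mul0mx, mulmx0, addr0, add0r, row_mx0, add_row_mx).
by rewrite !perm_mx_mul_const ?const_mx_mul_perm // -eX1 -eX2 -eX3 -eX4 -eY.
Qed.

Lemma rank1_normal_form_isomorphic k1 k2 p q
    (A B : 'M[rat]_(k1 + k1 + p, k2 + k2 + q))
    (X1 X2 : 'M[rat]_(k1, q)) (X3 X4 : 'M[rat]_(p, k2)) (Y : 'M[rat]_(p, q)) :
  rank1_normal_form A B X1 X2 X3 X4 Y -> fixable X1 X2 X3 X4 Y ->
  mx_isomorphic A B.
Proof.
case=> _ -> -> _ _ [P [Q [_ _ eY [[P1 [P2 [Q3 [Q4 [RX LX]]]]] |
                                   [P1 [P2 [Q3 [Q4 [RX LX]]]]]]]]].
  exact: swap_J_blocks_isomorphic RX LX eY.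
apply: mx_isomorphic_tr.
rewrite !tr_block_mx tr_col_mx tr_row_mx trmx0 trmx_const.
apply: swap_J_blocks_isomorphic RX LX _.
by rewrite {1}eY !trmx_mul mulmxA.
Qed.

(* The Gram-mate and rank hypotheses are what produce the block normal form;
   here that form is already part of [remaining_fixable]. *)
Theorem proposition6p1 (m n : nat) (A B : 'M[rat]_(m, n)) :
  gram_mates A B -> \rank (A - B) = 1%N -> remaining_fixable A B ->
  mx_isomorphic A B.
Proof.
move=> _ _ [k1 [k2 [p [q [em [en [P [Q [X1 [X2 [X3 [X4 [Y [pP pQ nf fixY]]]]]]]]]]]]]].
subst m n; rewrite !castmx_id in nf.
exact: mx_isomorphic_perm pP pQ (rank1_normal_form_isomorphic nf fixY).
Qed.
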